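(* Let $W$ and $\pi$ be as in the context. There exist constants $D>0$ and $\zeta\in(0,1)$, depending only on $W$, such that the following holds. Let $\alpha>0$, let $w(0)\in\mathbb R^{nd}$, let $(z(s))_{s\ge0}$ be any sequence in $\mathbb R^{nd}$ with $M:=\sup_{s\ge0}\|\nabla F(z(s))\|<\infty$, and define $w(t+1)=(W\otimes I_d)(w(t)-\alpha\nabla F(z(t)))$ for $t\ge0$. Then for all $t\ge0$, $$\|w(t)-n\pi\otimes\bar w(t)\|\le D\zeta^t\|w(0)\|+\frac{\alpha D\zeta}{1-\zeta}M.$$
   Context: $G=(V,E)$ is a directed graph on $\{1,\dots,n\}$ with a self-loop at every vertex and strongly connected; $d_j=|\{i:(j,i)\in E\}|$, $W_{ij}=1/d_j$ if $(j,i)\in E$ and $0$ otherwise. $\pi\in\mathbb R^n$ is the vector with $W\pi=\pi$, $\pi_i>0$, $\sum_i\pi_i=1$. $f_i:\mathbb R^d\to\mathbb R$ are differentiable and $\nabla F(x)=\mathrm{col}(\nabla f_1(x_1),\dots,\nabla f_n(x_n))$ for $x=\mathrm{col}(x_1,\dots,x_n)\in\mathbb R^{nd}$. $\bar w(t)=\frac1n\sum_iw_i(t)$, $n\pi\otimes\bar w(t)=\mathrm{col}(n\pi_1\bar w(t),\dots,n\pi_n\bar w(t))$, $\otimes$ is the Kronecker product, $\|\cdot\|$ the Euclidean norm. *)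

From HB Require Import structures.
From mathcomp Require Import all_boot all_order all_algebra.
From mathcomp Require Import all_classical all_reals all_analysis.
Set Implicit Arguments. Unset Strict Implicit. Unset Printing Implicit Defensive.
Import Order.TTheory GRing.Theory Num.Theory.
Local Open Scope ring_scope.

(* Vertices {1..n} are 'I_n; E j i means (j,i) is an edge. *)
Definition outdeg (n : nat) (E : rel 'I_n) (j : 'I_n) : nat := #|[set i | E j i]|.

Definition Wmat (R : realType) (n : nat) (E : rel 'I_n) : 'M[R]_n :=
  \matrix_(i, j) (if E j i then ((outdeg E j)%:R)^-1 else 0).

(* A vector x = col(x_1,...,x_n) in R^{nd} is stored as the n x d matrix whose
   i-th row is x_i.  Euclidean norm of the stacked vector: *)
Definition enorm (R : realType) (n d : nat) (x : 'M[R]_(n, d)) : R :=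
  Num.sqrt (\sum_(i < n) \sum_(k < d) x i k ^+ 2).

Definition grad (R : realType) (d : nat) (f : 'rV[R]_d -> R) (x : 'rV[R]_d) : 'rV[R]_d :=
  \row_(k < d) ('D_(delta_mx 0 k) f x).

Definition gradF (R : realType) (n d : nat) (f : 'I_n -> 'rV[R]_d -> R)
  (x : 'M[R]_(n, d)) : 'M[R]_(n, d) :=
  \matrix_(i, k) (grad (f i) (row i x) 0 k).

(* (W (x) I_d) x, with x stacked as above: the i-th block is sum_j W_ij x_j *)
Definition kronI (R : realType) (n d : nat) (W : 'M[R]_n) (x : 'M[R]_(n, d)) : 'M[R]_(n, d) :=
  W *m x.

Definition avg (R : realType) (n d : nat) (x : 'M[R]_(n, d)) : 'rV[R]_d :=
  (n%:R)^-1 *: \sum_(i < n) row i x.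

Definition npi_kron (R : realType) (n d : nat) (pi : 'I_n -> R) (x : 'M[R]_(n, d)) : 'M[R]_(n, d) :=
  \matrix_(i, k) (n%:R * pi i * avg x 0 k).

From HB Require Import structures.
From mathcomp Require Import all_boot all_order all_algebra.
From mathcomp Require Import all_classical all_reals all_analysis.
From mathcomp Require Import ring lra.
Import Order.TTheory GRing.Theory Num.Theory.
Local Open Scope classical_set_scope.
Local Open Scope ring_scope.

(* Since the columns of W sum to one and W pi = pi, the rank-one matrix
   P = pi 1^T satisfies W P = P W = P, P x = n pi (x) bar x, and the consensus
   error of the iteration is

     (I - P) w(t) = (W^t - P) w(0) - alpha sum_(s<t) (W^(t-s) - P) grad F(z(s)).

   Self-loops and strong connectivity make W^n entrywise positive, so (Dobrushin)
   W^n contracts the entrywise l1 norm of matrices with zero column sums by a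
   factor 1 - n delta < 1.  As W^k - P = W^k (I - P) and I - P has zero column
   sums, ||W^k - P|| decays like zeta^k, and a geometric series bounds the
   accumulated gradient terms. *)

Set Implicit Arguments. Unset Strict Implicit. Unset Printing Implicit Defensive.

Section RealInequalities.
Variable R : realFieldType.

Lemma bernoulli_ineq (x : R) (k : nat) : x <= 1 -> 1 - k%:R * x <= (1 - x) ^+ k.
Proof.
move=> x_le1; elim: k => [|k IHk]; first by rewrite mul0r subr0 expr0.
have x1_ge0 : 0 <= 1 - x by rewrite subr_ge0.
rewrite exprS; apply: le_trans (ler_wpM2l x1_ge0 IHk); rewrite -natr1.
have : 0 <= k%:R * x ^+ 2 by rewrite mulr_ge0 ?sqr_ge0.
by rewrite expr2; nra.
Qed.

Lemma exists_root_ge (q : R) (m : nat) :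
  0 <= q < 1 -> exists2 zeta : R, 0 < zeta < 1 & q <= zeta ^+ m.
Proof.
case/andP=> q_ge0 q_lt1; set x := (1 - q) / (m + 2)%:R.
have m2_gt0 : 0 < (m + 2)%:R :> R by rewrite ltr0n addn2.
have x_gt0 : 0 < x by rewrite divr_gt0 // subr_gt0.
have mx_le : m%:R * x <= 1 - q.
  rewrite /x mulrA ler_pdivrMr // mulrC.
  by apply: ler_wpM2l; [lra | rewrite ler_nat leq_addr].
have x_le : x <= 1 / 2.
  have m_ge0 : 0 <= m%:R :> R by [].
  rewrite /x ler_pdivrMr // natrD; lra.
exists (1 - x); first by apply/andP; split; lra.
by apply: le_trans (bernoulli_ineq _ _); lra.
Qed.

Lemma expn_divn_le (zeta q : R) (m k : nat) : (0 < m)%N ->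
  0 < zeta <= 1 -> 0 <= q <= zeta ^+ m -> zeta ^+ m * q ^+ (k %/ m) <= zeta ^+ k.
Proof.
move=> m_gt0 /andP[zeta_gt0 zeta_le1] /andP[q_ge0 q_le].
have zeta_ge0 := ltW zeta_gt0.
apply: le_trans (_ : zeta ^+ (m + m * (k %/ m)) <= _).
  by rewrite exprD exprM ler_wpM2l ?exprn_ge0 // lerXn2r ?nnegrE ?exprn_ge0.
apply: ler_wiXn2l => //.
by rewrite {1}(divn_eq k m) [(m * _)%N]mulnC [(m + _)%N]addnC leq_add2l ltnW // ltn_pmod.
Qed.

Lemma geometric_tail_le (zeta : R) (t : nat) : 0 <= zeta < 1 ->
  \sum_(s < t) zeta ^+ (t - s) <= zeta / (1 - zeta).
Proof.
case/andP=> zeta_ge0 zeta_lt1; set c := zeta / (1 - zeta).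
have c_ge0 : 0 <= c by rewrite divr_ge0 // subr_ge0 ltW.
have cE : c * (1 - zeta) = zeta by rewrite mulfVK // subr_eq0 gt_eqF.
elim: t => [|t IHt]; first by rewrite big_ord0.
rewrite big_ord_recr /= subSnn expr1.
have -> : \sum_(s < t) zeta ^+ (t.+1 - s) = zeta * \sum_(s < t) zeta ^+ (t - s).
  by rewrite mulr_sumr; apply: eq_bigr => s _; rewrite subSn ?exprS // ltnW.
by move: IHt; set S := \sum_(s < t) _; nra.
Qed.

Lemma sum_sqr_le_sqr_sum (I : finType) (c : I -> R) :
  (forall i, 0 <= c i) -> \sum_i c i ^+ 2 <= (\sum_i c i) ^+ 2.
Proof.
move=> c_ge0; rewrite [X in _ <= X]expr2 mulr_suml; apply: ler_sum => i _.
by rewrite expr2 ler_wpM2l // (bigD1 i) //= lerDl sumr_ge0.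
Qed.

Lemma cauchy_schwarz (I : finType) (a b : I -> R) :
  (\sum_i a i * b i) ^+ 2 <= (\sum_i a i ^+ 2) * (\sum_i b i ^+ 2).
Proof.
set A := \sum_i a i ^+ 2; set B := \sum_i b i ^+ 2; set C := \sum_i a i * b i.
have AB : A * B = \sum_i \sum_j a i ^+ 2 * b j ^+ 2.
  by rewrite mulr_suml; apply: eq_bigr => i _; rewrite mulr_sumr.
have BA : A * B = \sum_i \sum_j a j ^+ 2 * b i ^+ 2.
  rewrite mulrC mulr_suml; apply: eq_bigr => i _.
  by rewrite mulr_sumr; apply: eq_bigr => j _; rewrite mulrC.
have CC : C ^+ 2 = \sum_i \sum_j (a i * b i) * (a j * b j).
  by rewrite expr2 mulr_suml; apply: eq_bigr => i _; rewrite mulr_sumr.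
have lagrange : \sum_i \sum_j (a i * b j - a j * b i) ^+ 2 = A * B + A * B - 2 * C ^+ 2.
  rewrite {1}AB {}BA {}CC mulr_sumr -big_split -sumrB /=; apply: eq_bigr => i _.
  by rewrite mulr_sumr -big_split -sumrB /=; apply: eq_bigr => j _; ring.
have : 0 <= \sum_i \sum_j (a i * b j - a j * b i) ^+ 2.
  by apply: sumr_ge0 => i _; apply: sumr_ge0 => j _; apply: sqr_ge0.
by rewrite lagrange; lra.
Qed.

End RealInequalities.

Lemma minkowski (R : rcfType) (I : finType) (a b : I -> R) :
  Num.sqrt (\sum_i (a i + b i) ^+ 2)
    <= Num.sqrt (\sum_i a i ^+ 2) + Num.sqrt (\sum_i b i ^+ 2).
Proof.
set A := \sum_i a i ^+ 2; set B := \sum_i b i ^+ 2; set C := \sum_i a i * b i.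
have A_ge0 : 0 <= A by apply: sumr_ge0 => i _; apply: sqr_ge0.
have B_ge0 : 0 <= B by apply: sumr_ge0 => i _; apply: sqr_ge0.
have C_le : C <= Num.sqrt A * Num.sqrt B.
  rewrite -sqrtrM //; apply: le_trans (real_ler_norm (num_real C)) _.
  by rewrite -sqrtr_sqr ler_wsqrtr // cauchy_schwarz.
have -> : \sum_i (a i + b i) ^+ 2 = A + 2 * C + B.
  by rewrite mulr_sumr -!big_split; apply: eq_bigr => i _ /=; ring.
rewrite -[X in _ <= X]ger0_norm ?addr_ge0 ?sqrtr_ge0 // -sqrtr_sqr ler_wsqrtr //.
by rewrite sqrrD !sqr_sqrtr //; lra.
Qed.

Definition l1norm (R : numDomainType) (m n : nat) (A : 'M[R]_(m, n)) : R :=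
  \sum_i \sum_j `|A i j|.

Lemma l1norm_ge0 (R : numDomainType) (m n : nat) (A : 'M[R]_(m, n)) : 0 <= l1norm A.
Proof. by apply: sumr_ge0 => i _; apply: sumr_ge0. Qed.

Section FrobeniusNorm.
Variable R : realType.
Implicit Types m n p : nat.

Lemma enorm_ge0 m n (x : 'M[R]_(m, n)) : 0 <= enorm x.
Proof. exact: sqrtr_ge0. Qed.

Lemma enorm_pair m n (x : 'M[R]_(m, n)) :
  enorm x = Num.sqrt (\sum_(ij : 'I_m * 'I_n) x ij.1 ij.2 ^+ 2).
Proof. by rewrite /enorm pair_bigA. Qed.

Lemma enormD m n (x y : 'M[R]_(m, n)) : enorm (x + y) <= enorm x + enorm y.
Proof. by rewrite !enorm_pair; under eq_bigr do rewrite mxE; apply: minkowski. Qed.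

Lemma enormZ m n (c : R) (x : 'M[R]_(m, n)) : enorm (c *: x) = `|c| * enorm x.
Proof.
rewrite !enorm_pair -sqrtr_sqr -sqrtrM ?sqr_ge0 // mulr_sumr.
by congr Num.sqrt; apply: eq_bigr => ij _; rewrite mxE exprMn.
Qed.

Lemma enormB m n (x y : 'M[R]_(m, n)) : enorm (x - y) <= enorm x + enorm y.
Proof. by rewrite -[enorm y]mul1r -normrN1 -enormZ scaleN1r enormD. Qed.

Lemma enorm_sum m n (T : nat) (x : 'I_T -> 'M[R]_(m, n)) :
  enorm (\sum_(s < T) x s) <= \sum_(s < T) enorm (x s).
Proof.
elim/big_ind2: _ => [|x1 e1 x2 e2 le1 le2|//]; last first.
  by apply: le_trans (enormD _ _) (lerD le1 le2).
rewrite /enorm big1 ?sqrtr0 // => i _.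
by rewrite big1 // => j _; rewrite mxE expr0n.
Qed.

Lemma enorm_mulmx_le m n p (A : 'M[R]_(m, n)) (x : 'M[R]_(n, p)) :
  enorm (A *m x) <= l1norm A * enorm x.
Proof.
set X := \sum_i \sum_k x i k ^+ 2.
have A2_le : \sum_i \sum_j A i j ^+ 2 <= l1norm A ^+ 2.
  rewrite /l1norm !pair_bigA /=.
  under eq_bigr do rewrite -real_normK ?num_real //.
  by apply: sum_sqr_le_sqr_sum => ij.
have sqr_le : \sum_i \sum_k (A *m x) i k ^+ 2 <= l1norm A ^+ 2 * X.
  apply: le_trans (_ : \sum_i \sum_k
      (\sum_j A i j ^+ 2) * (\sum_j x j k ^+ 2) <= _).
    by apply: ler_sum => i _; apply: ler_sum => k _; rewrite mxE cauchy_schwarz.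
  under eq_bigr do rewrite -mulr_sumr.
  rewrite -mulr_suml [Y in _ * Y <= _]exchange_big /=.
  by rewrite ler_wpM2r // sumr_ge0 // => i _; rewrite sumr_ge0 // => k _; rewrite sqr_ge0.
apply: le_trans (ler_wsqrtr sqr_le) _.
by rewrite sqrtrM ?sqr_ge0 // sqrtr_sqr ger0_norm ?l1norm_ge0.
Qed.

End FrobeniusNorm.

Section ColStochastic.
Variables (R : realFieldType) (n : nat).
Implicit Types (A : 'M[R]_n) (p : nat).

Definition col_stochastic A : Prop :=
  (forall i j, 0 <= A i j) /\ (forall j, \sum_i A i j = 1).

Definition zero_col_sums p (Y : 'M[R]_(n, p)) : Prop := forall k, \sum_i Y i k = 0.

Lemma sum_col_mulmx m p (A : 'M[R]_(m, n)) (Y : 'M[R]_(n, p)) k :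
  \sum_i (A *m Y) i k = \sum_j (\sum_i A i j) * Y j k.
Proof.
under eq_bigr do rewrite mxE.
by rewrite exchange_big; apply: eq_bigr => j _; rewrite mulr_suml.
Qed.

Lemma zero_col_sums_mulmx A p (Y : 'M[R]_(n, p)) :
  (forall j, \sum_i A i j = 1) -> zero_col_sums Y -> zero_col_sums (A *m Y).
Proof.
by move=> A1 Y0 k; rewrite sum_col_mulmx; under eq_bigr do rewrite A1 mul1r.
Qed.

Lemma col_stochasticX A k : col_stochastic A -> col_stochastic (A ^+ k).
Proof.
case=> A_ge0 A1; elim: k => [|k [Ak_ge0 Ak1]].
  split=> [i j|j]; first by rewrite expr0 mxE ler0n.
  rewrite (bigD1 j) //= big1 ?addr0; first by rewrite expr0 mxE eqxx.
  by move=> i /negbTE ij; rewrite expr0 mxE ij.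
rewrite exprS -mulmxE; split=> [i j|j].
  by rewrite mxE sumr_ge0 // => l _; rewrite mulr_ge0.
by rewrite sum_col_mulmx; under eq_bigr do rewrite A1 mul1r.
Qed.

(* Dobrushin's contraction: subtracting the floor [delta] from every entry of
   [A] does not change [A *m Y], because the columns of [Y] sum to zero. *)
Lemma l1norm_mulmx_contract A p (Y : 'M[R]_(n, p)) (delta : R) :
  (forall i j, delta <= A i j) -> (forall j, \sum_i A i j = 1) -> zero_col_sums Y ->
  l1norm (A *m Y) <= (1 - n%:R * delta) * l1norm Y.
Proof.
move=> A_ge A1 Y0.
have AYE i k : (A *m Y) i k = \sum_j (A i j - delta) * Y j k.
  rewrite mxE; under [RHS]eq_bigr do rewrite mulrBl.
  by rewrite sumrB -mulr_sumr Y0 mulr0 subr0.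
apply: le_trans (_ : \sum_i \sum_k \sum_j (A i j - delta) * `|Y j k| <= _).
  apply: ler_sum => i _; apply: ler_sum => k _; rewrite AYE.
  apply: le_trans (ler_norm_sum _ _ _) _; apply: ler_sum => j _.
  by rewrite normrM ger0_norm // subr_ge0.
rewrite /l1norm mulr_sumr; under eq_bigr do rewrite exchange_big /=.
rewrite exchange_big; apply: ler_sum => j _; rewrite exchange_big mulr_sumr.
apply: ler_sum => k _.
by rewrite -mulr_suml sumrB A1 sumr_const card_ord mulr_natl.
Qed.

Lemma l1norm_col_stochastic_mulmx A p (Y : 'M[R]_(n, p)) :
  col_stochastic A -> zero_col_sums Y -> l1norm (A *m Y) <= l1norm Y.
Proof.
case=> A_ge0 A1 Y0.
by have := l1norm_mulmx_contract A_ge0 A1 Y0; rewrite mulr0 subr0 mul1r.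
Qed.

Lemma l1norm_expn_mulmx_le A m (q : R) p (Y : 'M[R]_(n, p)) k :
  col_stochastic A -> 0 <= q ->
  (forall Z : 'M[R]_(n, p), zero_col_sums Z -> l1norm (A ^+ m *m Z) <= q * l1norm Z) ->
  zero_col_sums Y -> l1norm (A ^+ k *m Y) <= q ^+ (k %/ m) * l1norm Y.
Proof.
move=> A_st q_ge0 Am_contr Y0.
have [_ Am1] := col_stochasticX m A_st.
have AmY a : zero_col_sums (A ^+ m ^+ a *m Y) /\
             l1norm (A ^+ m ^+ a *m Y) <= q ^+ a * l1norm Y.
  elim: a => [|a [Y0' IHa]]; first by rewrite !expr0 mul1mx mul1r.
  rewrite exprS -mulmxE -mulmxA; split; first exact: zero_col_sums_mulmx.
  by apply: le_trans (Am_contr _ Y0') _; rewrite exprS -mulrA ler_wpM2l.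
have [Y0' AmY_le] := AmY (k %/ m)%N.
rewrite {1}(divn_eq k m) addnC exprD mulnC exprM -mulmxE -mulmxA.
exact: le_trans (l1norm_col_stochastic_mulmx (col_stochasticX _ A_st) Y0') AmY_le.
Qed.

Lemma col_stochastic_decay A m : (0 < n)%N -> (0 < m)%N ->
  col_stochastic A -> (forall i j, 0 < (A ^+ m) i j) ->
  exists2 zeta : R, 0 < zeta < 1 &
    forall p k (Y : 'M[R]_(n, p)), zero_col_sums Y ->
      zeta ^+ m * l1norm (A ^+ k *m Y) <= zeta ^+ k * l1norm Y.
Proof.
move=> n_gt0 m_gt0 A_st Am_gt0.
have [Am_ge0 Am1] := col_stochasticX m A_st.
set delta := \big[Order.min/1]_(ij : 'I_n * 'I_n) (A ^+ m) ij.1 ij.2.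
have delta_gt0 : 0 < delta by apply: lt_bigmin => // ij _.
have delta_le i j : delta <= (A ^+ m) i j by apply: (bigmin_le _ (i, j)).
have ndelta_le1 : n%:R * delta <= 1.
  have j0 : 'I_n := Ordinal n_gt0.
  have : \sum_(i < n) delta <= \sum_i (A ^+ m) i j0 by apply: ler_sum.
  by rewrite Am1 sumr_const card_ord mulr_natl.
have [|zeta /andP[zeta_gt0 zeta_lt1] q_le] := @exists_root_ge R (1 - n%:R * delta) m.
  by rewrite subr_ge0 ndelta_le1 ltrBlDr ltrDl mulr_gt0 // ltr0n.
exists zeta; first by rewrite zeta_gt0.
move=> p k Y Y0.
have q_ge0 : 0 <= 1 - n%:R * delta by rewrite subr_ge0.
apply: le_trans (_ : zeta ^+ m * ((1 - n%:R * delta) ^+ (k %/ m) * l1norm Y) <= _).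
  apply: ler_wpM2l; first by rewrite exprn_ge0 ?ltW.
  apply: l1norm_expn_mulmx_le => // Z Z0.
  exact: l1norm_mulmx_contract.
rewrite mulrA ler_wpM2r ?l1norm_ge0 // expn_divn_le //; first by rewrite zeta_gt0 ltW.
by rewrite q_ge0.
Qed.

End ColStochastic.

Lemma mulmx_entry_gt0 (R : numDomainType) m n p (A : 'M[R]_(m, n)) (B : 'M[R]_(n, p)) i l j :
  (forall l', 0 <= A i l' * B l' j) -> 0 < A i l * B l j -> 0 < (A *m B) i j.
Proof.
move=> AB_ge0 AB_gt0; rewrite mxE (bigD1 l) //=.
by apply: lt_le_trans AB_gt0 _; rewrite lerDl sumr_ge0.
Qed.

Section IrreducibleAperiodic.
Variables (R : numDomainType) (n : nat) (E : rel 'I_n) (A : 'M[R]_n).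
Hypotheses (A_ge0 : forall i j, 0 <= A i j) (A_gt0 : forall i j, E j i -> 0 < A i j).
Hypothesis E_refl : forall i, E i i.

Lemma expn_mx_ge0 k i j : 0 <= (A ^+ k) i j.
Proof.
elim: k i j => [|k IHk] i j; first by rewrite expr0 mxE ler0n.
by rewrite exprS -mulmxE mxE sumr_ge0 // => l _; rewrite mulr_ge0.
Qed.

Lemma expn_path_gt0 x s : path E x s -> 0 < (A ^+ size s) (last x s) x.
Proof.
elim: s x => [|y s IHs] x /=; first by rewrite expr0 mxE eqxx ltr01.
case/andP=> Exy ys; rewrite exprSr -mulmxE; apply: (mulmx_entry_gt0 (l := y)).
  by move=> l; rewrite mulr_ge0 ?expn_mx_ge0.
by rewrite mulr_gt0 ?IHs ?A_gt0.
Qed.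

(* The self-loops make positivity of entries persist in higher powers. *)
Lemma expn_mx_gt0_leq k l i j : (k <= l)%N -> 0 < (A ^+ k) i j -> 0 < (A ^+ l) i j.
Proof.
move=> /subnK <-; elim: (l - k)%N => [|r IHr] Ak_gt0; first by rewrite add0n.
rewrite addSn exprS -mulmxE; apply: (mulmx_entry_gt0 (l := i)).
  by move=> l'; rewrite mulr_ge0 ?expn_mx_ge0.
by rewrite mulr_gt0 ?IHr ?A_gt0.
Qed.

Lemma expn_mx_card_gt0 : (forall i j, connect E i j) -> forall i j, 0 < (A ^+ n) i j.
Proof.
move=> E_conn i j; have /connectP[s Es ->] := E_conn j i.
case: (shortenP Es) => s' Es' s'_uniq _.
apply: (expn_mx_gt0_leq (k := size s')); last exact: expn_path_gt0.
by have := max_card (mem (j :: s')); rewrite card_ord (card_uniqP s'_uniq) => /ltnW.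
Qed.

End IrreducibleAperiodic.

Section ConsensusMatrix.
Variables (R : realType) (n : nat) (E : rel 'I_n).
Hypothesis E_refl : forall i, E i i.

Lemma outdeg_gt0 j : (0 < outdeg E j)%N.
Proof. by apply/card_gt0P; exists j; rewrite inE. Qed.

Lemma Wmat_gt0 i j : E j i -> 0 < Wmat R E i j.
Proof. by move=> Eji; rewrite mxE Eji invr_gt0 ltr0n outdeg_gt0. Qed.

Lemma Wmat_col_stochastic : col_stochastic (Wmat R E).
Proof.
split=> [i j|j]; first by rewrite mxE; case: ifP; rewrite ?invr_ge0.
under eq_bigr do rewrite mxE.
rewrite -big_mkcond /= sumr_const -[#|_|]cardsE -/(outdeg E j).
by rewrite -[LHS]mulr_natr mulVf // pnatr_eq0 -lt0n outdeg_gt0.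
Qed.

Lemma Wmat_decay : (0 < n)%N -> (forall i j, connect E i j) ->
  exists2 zeta : R, 0 < zeta < 1 &
    forall p k (Y : 'M[R]_(n, p)), zero_col_sums Y ->
      zeta ^+ n * l1norm (Wmat R E ^+ k *m Y) <= zeta ^+ k * l1norm Y.
Proof.
move=> n_gt0 E_conn; have [W_ge0 _] := Wmat_col_stochastic.
apply: col_stochastic_decay => //; first exact: Wmat_col_stochastic.
exact: (expn_mx_card_gt0 W_ge0 Wmat_gt0 E_refl).
Qed.

End ConsensusMatrix.

Section FixedMatrix.
Variables (R : pzRingType) (n : nat) (A P : 'M[R]_n).

Lemma expn_mulmx_fix k : A *m P = P -> A ^+ k *m P = P.
Proof.
move=> AP; elim: k => [|k IHk]; first by rewrite expr0 mul1mx.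
by rewrite exprS -mulmxE -mulmxA IHk.
Qed.

Lemma mulmx_expn_fix k : P *m A = P -> P *m A ^+ k = P.
Proof.
move=> PA; elim: k => [|k IHk]; first by rewrite expr0 mulmx1.
by rewrite exprSr -mulmxE mulmxA IHk.
Qed.

End FixedMatrix.

Section PerturbedIteration.
Variables (R : realType) (n d : nat) (W P : 'M[R]_n) (alpha : R).
Variables (w g : nat -> 'M[R]_(n, d)).
Hypothesis w_rec : forall t, w t.+1 = W *m (w t - alpha *: g t).

Lemma iterate_unroll t :
  w t = W ^+ t *m w 0 - alpha *: \sum_(s < t) W ^+ (t - s) *m g s.
Proof.
elim: t => [|t IHt]; first by rewrite big_ord0 scaler0 subr0 expr0 mul1mx.
rewrite w_rec IHt big_ord_recr /= subSnn expr1.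
have -> : \sum_(s < t) W ^+ (t.+1 - s) *m g s = W *m \sum_(s < t) W ^+ (t - s) *m g s.
  rewrite mulmx_sumr; apply: eq_bigr => s _.
  by rewrite subSn 1?ltnW // exprS -mulmxE mulmxA.
by rewrite !mulmxBr -!scalemxAr exprS -mulmxE mulmxA scalerDr opprD addrA.
Qed.

Hypothesis PW : P *m W = P.

Lemma iterate_error t :
  w t - P *m w t =
    (W ^+ t - P) *m w 0 - alpha *: \sum_(s < t) (W ^+ (t - s) - P) *m g s.
Proof.
rewrite {2}iterate_unroll mulmxBr -scalemxAr mulmx_sumr mulmxA mulmx_expn_fix //.
under eq_bigr do rewrite mulmxA mulmx_expn_fix //.
rewrite iterate_unroll mulmxBl; under [in RHS]eq_bigr do rewrite mulmxBl.
by rewrite sumrB scalerBr opprB [X in _ + X = _]addrC opprD opprK addrACA.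
Qed.

Lemma iterate_error_le (D zeta M : R) t :
  0 <= alpha -> 0 <= D -> 0 <= zeta < 1 ->
  (forall k (x : 'M[R]_(n, d)), enorm ((W ^+ k - P) *m x) <= D * zeta ^+ k * enorm x) ->
  (forall s, enorm (g s) <= M) ->
  enorm (w t - P *m w t)
    <= D * zeta ^+ t * enorm (w 0) + alpha * D * zeta / (1 - zeta) * M.
Proof.
move=> alpha_ge0 D_ge0 /andP[zeta_ge0 zeta_lt1] decay g_le.
have M_ge0 : 0 <= M := le_trans (enorm_ge0 _) (g_le 0%N).
rewrite iterate_error; apply: le_trans (enormB _ _) _.
rewrite enormZ ger0_norm //; apply: lerD; first exact: decay.
have -> : alpha * D * zeta / (1 - zeta) * M = alpha * (D * M * (zeta / (1 - zeta))).
  by ring.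
apply: ler_wpM2l => //; apply: le_trans (enorm_sum _) _.
apply: le_trans (_ : \sum_(s < t) D * M * zeta ^+ (t - s) <= _).
  apply: ler_sum => s _; apply: le_trans (decay _ _) _.
  by rewrite mulrAC; apply: ler_wpM2r; rewrite ?exprn_ge0 ?ler_wpM2l.
rewrite -mulr_sumr; apply: ler_wpM2l; first exact: mulr_ge0.
by apply: geometric_tail_le; rewrite zeta_ge0.
Qed.

End PerturbedIteration.

Lemma stochastic_power_decay (R : realType) (n m d : nat) (W P : 'M[R]_n) (zeta c : R) :
  0 < zeta -> W *m P = P -> zero_col_sums (1%:M - P) -> l1norm (1%:M - P) <= c ->
  (forall p k (Y : 'M[R]_(n, p)), zero_col_sums Y ->
      zeta ^+ m * l1norm (W ^+ k *m Y) <= zeta ^+ k * l1norm Y) ->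
  forall k (x : 'M[R]_(n, d)), enorm ((W ^+ k - P) *m x) <= c / zeta ^+ m * zeta ^+ k * enorm x.
Proof.
move=> zeta_gt0 WP P0 P_le decay k x.
have zetam_gt0 : 0 < zeta ^+ m by rewrite exprn_gt0.
have -> : W ^+ k - P = W ^+ k *m (1%:M - P) by rewrite mulmxBr mulmx1 expn_mulmx_fix.
apply: le_trans (enorm_mulmx_le _ _) _; rewrite ler_wpM2r ?enorm_ge0 //.
rewrite mulrAC ler_pdivlMr // mulrC; apply: le_trans (decay _ _ _ P0) _.
by rewrite [c * _]mulrC; apply: ler_wpM2l => //; rewrite exprn_ge0 ?ltW.
Qed.

Section ConsensusProjector.
Variables (R : realType) (n : nat) (pi : 'I_n -> R).

Definition pi_proj : 'M[R]_n := \matrix_(i, j) pi i.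

Lemma npi_kronE d (x : 'M[R]_(n, d)) : (0 < n)%N -> npi_kron pi x = pi_proj *m x.
Proof.
move=> n_gt0; apply/matrixP => i k; rewrite !mxE /avg summxE.
under eq_bigr do rewrite mxE; under [RHS]eq_bigr do rewrite mxE.
by rewrite -mulr_sumr mulrAC mulVKf 1?mulrC // pnatr_eq0 -lt0n.
Qed.

Lemma pi_proj_mulmx (A : 'M[R]_n) : (forall j, \sum_i A i j = 1) -> pi_proj *m A = pi_proj.
Proof.
move=> A1; apply/matrixP => i j; rewrite !mxE; under eq_bigr do rewrite mxE.
by rewrite -mulr_sumr A1 mulr1.
Qed.

Lemma mulmx_pi_proj (A : 'M[R]_n) :
  (forall i, \sum_j A i j * pi j = pi i) -> A *m pi_proj = pi_proj.
Proof.
by move=> Api; apply/matrixP => i j; rewrite !mxE -Api; under eq_bigr do rewrite mxE.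
Qed.

Lemma zero_col_sums_pi_proj : \sum_i pi i = 1 -> zero_col_sums (1%:M - pi_proj).
Proof.
move=> pi1 j; under eq_bigr do rewrite !mxE.
rewrite sumrB pi1 (bigD1 j) //= eqxx big1 ?addr0 ?subrr // => i /negbTE ij.
by rewrite ij.
Qed.

Lemma l1norm_pi_proj_le : (forall i, 0 <= pi i <= 1) -> l1norm (1%:M - pi_proj) <= n%:R ^+ 2.
Proof.
move=> pi01; apply: le_trans (_ : \sum_(i < n) \sum_(j < n) (1 : R) <= _).
  apply: ler_sum => i _; apply: ler_sum => j _; rewrite !mxE ler_norml.
  by have /andP[? ?] := pi01 i; case: (i == j); rewrite ?mulr1n ?mulr0n; lra.
by rewrite !sumr_const card_ord -mulrnA expr2 -natrM.
Qed.

End ConsensusProjector.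

Unset Implicit Arguments. Set Strict Implicit.

Theorem lemma3p1 (R : realType) (n : nat) (E : rel 'I_n) (pi : 'I_n -> R)
  (Hloop : forall i, E i i)
  (Hsc : forall i j, connect E i j)
  (Hpi_fix : forall i, \sum_(j < n) Wmat R E i j * pi j = pi i)
  (Hpi_pos : forall i, 0 < pi i)
  (Hpi_sum : \sum_(i < n) pi i = 1) :
  exists (D zeta : R), 0 < D /\ 0 < zeta < 1 /\
  forall (d : nat) (f : 'I_n -> 'rV[R]_d -> R),
    (forall i x, differentiable (f i) x) ->
  forall (alpha : R) (w z : nat -> 'M[R]_(n, d)),
    0 < alpha ->
    has_ubound [set enorm (gradF f (z s)) | s in [set: nat]] ->
    (forall t, w t.+1 = kronI (Wmat R E) (w t - alpha *: gradF f (z t))) ->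
  forall t : nat,
    enorm (w t - npi_kron pi (w t))
      <= D * zeta ^+ t * enorm (w 0%N)
         + alpha * D * zeta / (1 - zeta) * sup [set enorm (gradF f (z s)) | s in [set: nat]].
Proof.
have n_gt0 : (0 < n)%N.
  case: (posnP n) => // n0; move: Hpi_sum.
  rewrite big1 => [/eqP|i _]; first by rewrite eq_sym oner_eq0.
  by have := ltn_ord i; rewrite {2}n0 ltn0.
have pi01 i : 0 <= pi i <= 1.
  by rewrite ltW // -Hpi_sum (bigD1 i) //= lerDl sumr_ge0 // => j _; rewrite ltW.
have [zeta /andP[zeta_gt0 zeta_lt1] W_decay] := Wmat_decay R Hloop n_gt0 Hsc.
have [_ W1] := Wmat_col_stochastic R Hloop.
have D_gt0 : 0 < n%:R ^+ 2 / zeta ^+ n by rewrite divr_gt0 ?exprn_gt0 ?ltr0n.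
exists (n%:R ^+ 2 / zeta ^+ n), zeta; do 2!split => //; first by rewrite zeta_gt0.
move=> d f _ alpha w z alpha_gt0 grad_ub w_rec t; rewrite npi_kronE //.
apply: (iterate_error_le w_rec); rewrite ?ltW ?zeta_gt0 //.
- exact: pi_proj_mulmx.
- apply: stochastic_power_decay W_decay => //.
  + exact: mulmx_pi_proj.
  + exact: zero_col_sums_pi_proj.
  + exact: l1norm_pi_proj_le.
- by move=> s; apply: (ub_le_sup grad_ub); exists s.
Qed.
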